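(* Let $\tau:\mathbb N\to\mathbb N$ be defined by $\tau(n)=\lfloor\varphi n+1\rfloor$ if $n\in R_{2,0}$, $\tau(n)=\lfloor\varphi n-1\rfloor$ if $n\in R_{1,0}$, and $\tau(n)=\lfloor(\varphi-1)n+1\rfloor$ if $n\in R_{1,1}$. Then for every integer $n\geq 1$, $\tau^n(3)=F(n+3)+2$.
   Context: $\mathbb N=\{1,2,\dots\}$, $\varphi=\frac{1+\sqrt5}{2}$, $F$ the Fibonacci sequence with $F(0)=0$, $F(1)=F(2)=1$, $F(n)=F(n-1)+F(n-2)$. For $i\in\mathbb Z^{\ge0},j\in\mathbb Z$, $R_{i,j}$ is the range of $n\mapsto F(i+1)\lfloor n\varphi\rfloor+F(i)n-j$, $n\in\mathbb N$; the sets $R_{2,0},R_{1,0},R_{1,1}$ partition $\mathbb N$. $\tau^n$ denotes the $n$-fold composition. *)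

From Stdlib Require Import Reals ZArith Lia Lra ClassicalEpsilon.
Open Scope R_scope.

Definition phi : R := (1 + sqrt 5) / 2.

(* Floor function R -> Z: up x is the unique integer with x < up x <= x + 1 *)
Definition floorZ (x : R) : Z := (up x - 1)%Z.

Fixpoint F (n : nat) : nat :=
  match n with
  | O => O
  | S O => 1%nat
  | S ((S k) as k') => (F k' + F k)%nat
  end.

Definition inR (i : nat) (j : Z) (m : nat) : Prop :=
  exists k : nat, (1 <= k)%nat /\
    Z.of_nat m = (Z.of_nat (F (i + 1)) * floorZ (INR k * phi)
                  + Z.of_nat (F i) * Z.of_nat k - j)%Z.

(* The map tau (the three sets R_{2,0}, R_{1,0}, R_{1,1} partition N;
   the value outside them, e.g. at 0, is irrelevant). *)
Definition tau (n : nat) : nat :=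
  if excluded_middle_informative (inR 2 0 n) then
    Z.to_nat (floorZ (phi * INR n + 1))
  else if excluded_middle_informative (inR 1 0 n) then
    Z.to_nat (floorZ (phi * INR n - 1))
  else if excluded_middle_informative (inR 1 1 n) then
    Z.to_nat (floorZ ((phi - 1) * INR n + 1))
  else O.

(** With psi = 1 - phi, the Fibonacci recurrence gives the Binet-type identity
    psi^n = F(n+1) - phi F(n), and for -1 <= psi <= 0 the powers psi^n with n >= m
    (m even) lie between psi^(m+1) and psi^m.  For n >= 4 this yields three facts about
    N = F(n) + 2: N = floor(k phi) + k with k = F(n-2) + 1, so N lies in R_{1,0};
    any k with N = 2 floor(k phi) + k would have to be F(n-3) + 1, which gives the wrong
    parity, so N is not in R_{2,0}; and phi N - 1 = F(n+1) + 2 phi - 1 - psi^n has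
    floor F(n+1) + 2.  Hence tau(F(n) + 2) = F(n+1) + 2, and since tau(3) = 5 = F(4) + 2
    the theorem follows by induction. *)

From Stdlib Require Import Reals ZArith Lia Psatz ClassicalEpsilon.
Open Scope R_scope.

Definition psi : R := 1 - phi.

Lemma phi_bounds : 8 / 5 < phi < 5 / 3.
Proof.
  pose proof (sqrt_sqrt 5 ltac:(lra)). pose proof (sqrt_pos 5).
  unfold phi; split; nra.
Qed.

Lemma phi_sq : phi * phi = phi + 1.
Proof. pose proof (sqrt_sqrt 5 ltac:(lra)). unfold phi. nra. Qed.

Lemma psi_bounds : -1 <= psi <= 0.
Proof. pose proof phi_bounds. unfold psi. lra. Qed.

Lemma F_SS (n : nat) : F (S (S n)) = (F (S n) + F n)%nat.
Proof. reflexivity. Qed.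

Lemma psi_pow_F (n : nat) : psi ^ n = INR (F (S n)) - phi * INR (F n).
Proof.
  induction n as [|n IH]; [simpl; lra|].
  rewrite F_SS, plus_INR, <- tech_pow_Rmult, IH. unfold psi.
  replace ((1 - phi) * (INR (F (S n)) - phi * INR (F n)))
    with (INR (F (S n)) - phi * INR (F (S n)) + phi * phi * INR (F n) - phi * INR (F n))
    by ring.
  rewrite phi_sq. ring.
Qed.

Lemma psi_pow_small :
  psi ^ 2 = 2 - phi /\ psi ^ 3 = 3 - 2 * phi /\
  psi ^ 4 = 5 - 3 * phi /\ psi ^ 5 = 8 - 5 * phi.
Proof. rewrite !psi_pow_F. simpl. lra. Qed.

Lemma pow_nonpos_bounds (x : R) (n : nat) : -1 <= x <= 0 -> x <= x ^ n <= 1.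
Proof. intros Hx. induction n as [|n IH]; simpl; nra. Qed.

Lemma pow_nonpos_even_bounds (x : R) (m n : nat) :
  -1 <= x <= 0 -> Nat.Even m -> (m <= n)%nat -> x ^ S m <= x ^ n <= x ^ m.
Proof.
  intros Hx [k ->] Hmn.
  replace n with (2 * k + (n - 2 * k))%nat by lia.
  rewrite pow_add, <- tech_pow_Rmult.
  assert (0 <= x ^ (2 * k)) by (rewrite pow_sqr; apply pow_le; nra).
  pose proof (pow_nonpos_bounds x (n - 2 * k) Hx). nra.
Qed.

Lemma floorZ_unique (x : R) (z : Z) : IZR z <= x < IZR z + 1 -> floorZ x = z.
Proof. intros Hz. symmetry. apply Int_part_spec. lra. Qed.

Lemma floorZ_spec (x : R) : IZR (floorZ x) <= x < IZR (floorZ x) + 1.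
Proof. destruct (base_Int_part x). unfold floorZ. fold (Int_part x). lra. Qed.

Lemma tau_R20 (n : nat) : inR 2 0 n -> tau n = Z.to_nat (floorZ (phi * INR n + 1)).
Proof. intros H. unfold tau. destruct (excluded_middle_informative _); tauto. Qed.

Lemma tau_R10 (n : nat) :
  ~ inR 2 0 n -> inR 1 0 n -> tau n = Z.to_nat (floorZ (phi * INR n - 1)).
Proof.
  intros H20 H10. unfold tau.
  destruct (excluded_middle_informative _); [tauto|].
  destruct (excluded_middle_informative _); tauto.
Qed.

Lemma tau_3 : tau 3 = 5%nat.
Proof.
  pose proof phi_bounds.
  assert (Hfloor : floorZ (INR 1 * phi) = 1%Z) by (apply floorZ_unique; simpl; lra).
  rewrite tau_R20.
  - rewrite (floorZ_unique _ 5); [reflexivity|]. simpl. lra.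
  - exists 1%nat. split; [lia|]. rewrite Hfloor. reflexivity.
Qed.

Lemma F_add2_in_R10 (n : nat) : (4 <= n)%nat -> inR 1 0 (F n + 2).
Proof.
  intros Hn. destruct n as [|[|n]]; [lia|lia|].
  exists (F n + 1)%nat. split; [lia|].
  rewrite (floorZ_unique _ (Z.of_nat (F (S n)) + 1)).
  { change (F (1 + 1)) with 1%nat. change (F 1) with 1%nat. rewrite F_SS. lia. }
  pose proof phi_bounds. pose proof (psi_pow_F n).
  pose proof (pow_nonpos_even_bounds psi 2 n psi_bounds ltac:(now exists 1%nat) ltac:(lia)).
  destruct psi_pow_small as (H2 & H3 & _).
  rewrite plus_IZR, <- INR_IZR_INZ, plus_INR. simpl (INR 1).
  split; nra.
Qed.

Lemma F_add2_not_in_R20 (n : nat) : (3 <= n)%nat -> ~ inR 2 0 (F n + 2).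
Proof.
  intros Hn [k [Hk HE]]. destruct n as [|[|[|p]]]; [lia|lia|lia|].
  change (F (2 + 1)) with 2%nat in HE. change (F 2) with 1%nat in HE.
  rewrite !F_SS in HE.
  set (a := floorZ (INR k * phi)) in HE.
  set (q := F p) in HE. set (r := F (S p)) in HE.
  assert (HER : 2 * IZR a + INR k = 2 * INR r + INR q + 2).
  { rewrite !INR_IZR_INZ, <- !mult_IZR, <- !plus_IZR. apply IZR_eq. lia. }
  (* the floor pins (2 phi + 1) k to [N, N + 2), and N = (2 phi + 1) q + 2 + 2 psi^p *)
  assert (Hkq : 0 < INR k - INR q < 2).
  { pose proof phi_bounds. pose proof (floorZ_spec (INR k * phi)) as Hfloor.
    pose proof (psi_pow_F p) as Hbinet. pose proof (pow_nonpos_bounds psi p psi_bounds).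
    fold a in Hfloor. fold q r in Hbinet. unfold psi in *.
    assert (0 < (2 * phi + 1) * (INR k - INR q) < (2 * phi + 1) * 2) by nra.
    split; nra. }
  assert (q < k)%nat by (apply INR_lt; lra).
  assert (k < q + 2)%nat by (apply INR_lt; rewrite plus_INR; simpl; lra).
  assert (k = S q) as -> by lia.
  lia.
Qed.

Lemma floor_phi_F_add2 (n : nat) :
  (4 <= n)%nat -> floorZ (phi * INR (F n + 2) - 1) = Z.of_nat (F (S n) + 2).
Proof.
  intros Hn. apply floorZ_unique.
  pose proof phi_bounds. pose proof (psi_pow_F n).
  pose proof (pow_nonpos_even_bounds psi 4 n psi_bounds ltac:(now exists 2%nat) Hn).
  destruct psi_pow_small as (_ & _ & H4 & H5).
  rewrite <- INR_IZR_INZ, !plus_INR. simpl (INR 2).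
  split; nra.
Qed.

Lemma tau_F_add2 (n : nat) : (4 <= n)%nat -> tau (F n + 2) = (F (S n) + 2)%nat.
Proof.
  intros Hn.
  rewrite tau_R10, floor_phi_F_add2 by auto using F_add2_not_in_R20, F_add2_in_R10 with arith.
  apply Nat2Z.id.
Qed.

Theorem theorem4p7 : forall n : nat, (1 <= n)%nat ->
  Nat.iter n tau 3%nat = (F (n + 3) + 2)%nat.
Proof.
  intros n Hn. destruct n as [|n]; [lia|]. clear Hn.
  induction n as [|n IH]; [exact tau_3|].
  change (Nat.iter (S (S n)) tau 3%nat) with (tau (Nat.iter (S n) tau 3%nat)).
  rewrite IH, tau_F_add2 by lia.
  reflexivity.
Qed.
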